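(* Let $\mu$ be a probability measure on $\mathbb{R}$ admitting a density with respect to Lebesgue measure. Let $N\ge 2$, $p_1,\dots,p_N\ge1$, $p=\sum_i p_i$, and let $\mathbf{C}=\mathbf{I}_p-\mathbf{K}$, where $\mathbf{K}$ is the $p\times p$ block matrix (blocks of sizes $p_i\times p_j$) with zero diagonal blocks and off-diagonal blocks $\mathbf{C}_{i,j}\in\mathbb{R}^{p_i\times p_j}$, $i\ne j$. If all entries of the off-diagonal blocks $\mathbf{C}_{i,j}$ are sampled independently at random from $\mu$, then $\mathbf{C}$ is invertible with probability $1$. *)

From HB Require Import structures.
From mathcomp Require Import all_boot all_order all_algebra.
From mathcomp Require Import all_classical all_reals all_analysis.
Set Implicit Arguments. Unset Strict Implicit. Unset Printing Implicit Defensive.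
Import Order.TTheory GRing.Theory Num.Theory.
Local Open Scope classical_set_scope.
Local Open Scope ring_scope.

Definition has_lebesgue_density (R : realType)
    (mu : set R -> \bar R) : Prop :=
  exists f : R -> R, measurable_fun setT f /\ (forall x, 0 <= f x) /\
    forall A : set R, measurable A ->
      mu A = (\int[lebesgue_measure]_(x in A) (f x)%:E)%E.

Definition mutually_independent (d : measure_display) (T : measurableType d)
    (R : realType) (P : probability T R) (I : finType) (X : I -> T -> R) : Prop :=
  forall B : I -> set R, (forall i, measurable (B i)) ->
    P (\bigcap_(i in [set: I]) (X i @^-1` B i)) =
    (\prod_(i : I) P (X i @^-1` B i))%E.

Definition has_law (d : measure_display) (T : measurableType d)
    (R : realType) (P : probability T R) (X : T -> R) (mu : set R -> \bar R) : Prop :=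
  measurable_fun setT X /\
  forall A : set R, measurable A -> P (X @^-1` A) = mu A.

(* block index of a row/column index of a (\sum_i p i) x (\sum_i p i) matrix *)
Definition blk (N : nat) (p : 'I_N -> nat) (r : 'I_(\sum_(i < N) p i)) : 'I_N :=
  tagnat.sig1 r.
Arguments blk {N} p r.

Definition offdiag (N : nat) (p : 'I_N -> nat)
    (rc : 'I_(\sum_(i < N) p i) * 'I_(\sum_(i < N) p i)) : bool :=
  blk p rc.1 != blk p rc.2.
Arguments offdiag {N} p rc.

Definition offdiag_pos (N : nat) (p : 'I_N -> nat) :=
  {rc : 'I_(\sum_(i < N) p i) * 'I_(\sum_(i < N) p i) | offdiag p rc}.
Arguments offdiag_pos {N} p.

Definition Kmat (R : ringType) (N : nat) (p : 'I_N -> nat)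
    (x : offdiag_pos p -> R) : 'M[R]_(\sum_(i < N) p i) :=
  \matrix_(r, c) match boolP (offdiag p (r, c)) with
                 | AltTrue h => x (exist _ (r, c) h)
                 | AltFalse _ => 0
                 end.

Definition Cmat (R : ringType) (N : nat) (p : 'I_N -> nat)
    (x : offdiag_pos p -> R) : 'M[R]_(\sum_(i < N) p i) :=
  1%:M - Kmat x.

From HB Require Import structures.
From mathcomp Require Import all_boot all_order all_algebra.
From mathcomp Require Import all_classical all_reals all_analysis.
From mathcomp Require Import ring measurable_realfun.
Import Order.TTheory GRing.Theory Num.Theory.
Local Open Scope classical_set_scope.
Local Open Scope ring_scope.

(** The determinant of [C] is affine in each off-diagonal entry (expand along
the entry's row) and equals 1 when all entries vanish, so it is a nonzero
multi-affine function of the entries.  Such a function [phi] of independent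
random variables with an atomless common law vanishes with probability 0, by
induction on the number of variables it depends on: isolating one of them,
[phi = b + X_k * a] where [a] and [b] depend only on the other variables.
Where [a = 0], also [b = 0], and one of [a], [b] is a nonzero multi-affine
function of fewer variables.  Where [a <> 0], [X_k] must hit the single point
[-b / a]; since [X_k] is independent of [(a, b)], the joint law is a product
and Fubini makes this event null. *)

Section MultiAffine.
Context {R : comPzRingType} {I : finType}.
Implicit Types (x : I -> R) (phi : (I -> R) -> R) (J : {set I}).

Lemma dfwith_id x k : dfwith x k (x k) = x.
Proof. by apply/funext => j; case: dfwithP. Qed.

Lemma dfwith_dfwith x k (s t : R) : dfwith (dfwith x k s) k t = dfwith x k t.
Proof.
apply/funext => j; have [<-|kj] := eqVneq k j; first by rewrite !dfwithin.
by rewrite !dfwithout.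
Qed.

Lemma dfwithC x j k (s t : R) :
  j != k -> dfwith (dfwith x j s) k t = dfwith (dfwith x k t) j s.
Proof.
move=> jk; apply/funext => i.
have [<-|ki] := eqVneq k i; first by rewrite dfwithin dfwithout // dfwithin.
have [<-|ji] := eqVneq j i; first by rewrite [LHS]dfwithout 1?eq_sym // !dfwithin.
by rewrite !dfwithout.
Qed.

Definition depends_only_on J phi := forall x y, {in J, x =1 y} -> phi x = phi y.

Definition coordwise_affine phi := forall k x t,
  phi (dfwith x k t) = phi (dfwith x k 0) + t * (phi (dfwith x k 1) - phi (dfwith x k 0)).

Definition multiaffine_on J phi := depends_only_on J phi /\ coordwise_affine phi.

Definition intercept phi k x := phi (dfwith x k 0).

Definition slope phi k x := phi (dfwith x k 1) - phi (dfwith x k 0).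

Lemma coordwise_affineE phi k x :
  coordwise_affine phi -> phi x = intercept phi k x + x k * slope phi k x.
Proof. by move=> aff; rewrite -{1}(dfwith_id x k) aff. Qed.

Lemma coordwise_affine_dfwith phi k c :
  coordwise_affine phi -> coordwise_affine (fun x => phi (dfwith x k c)).
Proof.
move=> aff j x t; have [->|jk] := eqVneq j k.
  by rewrite !dfwith_dfwith subrr mulr0 addr0.
by rewrite !(dfwithC _ _ _ _ _ jk) aff.
Qed.

Lemma depends_only_on_dfwith J phi k c :
  depends_only_on J phi -> depends_only_on (J :\ k) (fun x => phi (dfwith x k c)).
Proof.
move=> dep x y xy; apply: dep => j jJ.
have [<-|kj] := eqVneq k j; first by rewrite !dfwithin.
by rewrite !dfwithout // xy // in_setD1 eq_sym kj.
Qed.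

Lemma multiaffine_intercept J phi k :
  multiaffine_on J phi -> multiaffine_on (J :\ k) (intercept phi k).
Proof.
by case=> dep aff; split; [exact: depends_only_on_dfwith | exact: coordwise_affine_dfwith].
Qed.

Lemma depends_only_onB J f g :
  depends_only_on J f -> depends_only_on J g -> depends_only_on J (fun x => f x - g x).
Proof. by move=> df dg x y xy; rewrite (df x y xy) (dg x y xy). Qed.

Lemma coordwise_affineB f g :
  coordwise_affine f -> coordwise_affine g -> coordwise_affine (fun x => f x - g x).
Proof. by move=> af ag k x t; rewrite af ag; ring. Qed.

Lemma multiaffine_slope J phi k :
  multiaffine_on J phi -> multiaffine_on (J :\ k) (slope phi k).
Proof.
case=> dep aff; split.
  by apply: depends_only_onB; exact: depends_only_on_dfwith.
by apply: coordwise_affineB; exact: coordwise_affine_dfwith.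
Qed.

Lemma depends_only_onT phi : depends_only_on [set: I]%SET phi.
Proof. by move=> x y xy; congr phi; apply/funext => j; apply: xy; rewrite inE. Qed.

Lemma depends_only_on0 phi x y : depends_only_on finset.set0 phi -> phi x = phi y.
Proof. by move=> dep; apply: dep => j; rewrite inE. Qed.

Lemma intercept_or_slope_neq0 phi k :
  (exists x, phi x != 0) -> coordwise_affine phi ->
  (exists x, intercept phi k x != 0) \/ (exists x, slope phi k x != 0).
Proof.
move=> [x phix] aff; rewrite (coordwise_affineE phi k x aff) in phix.
have [i0|i0] := eqVneq (intercept phi k x) 0; last by left; exists x.
by right; exists x; apply: contraNneq phix => ->; rewrite i0 mulr0 addr0.
Qed.

End MultiAffine.

Lemma det_add_delta (R : comPzRingType) n (A : 'M[R]_n) i j t :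
  \det (A + t *: delta_mx i j) = \det A + t * cofactor A i j.
Proof.
(* The cofactors along row [i] do not see row [i]. *)
have cofE j' : cofactor (A + t *: delta_mx i j) i j' = cofactor A i j'.
  rewrite /cofactor; congr (_ * \det _); apply/matrixP => a b.
  by rewrite !mxE eq_sym (negbTE (neq_lift _ _)) mulr0 addr0.
rewrite !(expand_det_row _ i).
under eq_bigr => j' _ do rewrite cofE !mxE eqxx mulrDl.
rewrite big_split /=; congr (_ + _).
by rewrite (bigD1 j) //= eqxx mulr1 big1 ?addr0 // => j' /negbTE ->; rewrite mulr0 mul0r.
Qed.

Section Kmat.
Context {R : nzRingType} {N : nat} {p : 'I_N -> nat}.
Implicit Types (x : offdiag_pos p -> R) (r c : 'I_(\sum_(i < N) p i)).

Lemma Kmat_offdiag x r c (rc : offdiag p (r, c)) : Kmat x r c = x (exist _ (r, c) rc).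
Proof.
rewrite mxE; destruct (boolP (offdiag p (r, c))) as [rc'|nrc].
  by congr x; apply: val_inj.
by rewrite rc in nrc.
Qed.

Lemma Kmat_diag x r c : ~~ offdiag p (r, c) -> Kmat x r c = 0.
Proof.
move=> nrc; rewrite mxE; destruct (boolP (offdiag p (r, c))) as [rc|] => //.
by rewrite rc in nrc.
Qed.

Lemma Kmat_dfwith x k t :
  Kmat (dfwith x k t) = Kmat (dfwith x k 0) + t *: delta_mx (val k).1 (val k).2.
Proof.
apply/matrixP => r c.
rewrite [in RHS]mxE [X in _ + X]mxE [delta_mx _ _ r c]mxE -xpair_eqE -surjective_pairing.
have [rc|rc] := boolP (offdiag p (r, c)); last first.
  have /negbTE-> : (r, c) != val k by apply: contraNneq rc => ->; exact: valP.
  by rewrite !Kmat_diag // mulr0 addr0.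
rewrite !(Kmat_offdiag _ _ _ rc).
have [->|kne] := eqVneq k (exist _ (r, c) rc); first by rewrite !dfwithin eqxx mulr1 add0r.
rewrite !dfwithout // (_ : (r, c) == val k = false) ?mulr0 ?addr0 //.
by apply: contraNF kne => /eqP rck; apply/eqP/val_inj; rewrite /= rck.
Qed.

Lemma Cmat_dfwith x k t :
  Cmat (dfwith x k t) = Cmat (dfwith x k 0) + (- t) *: delta_mx (val k).1 (val k).2.
Proof. by rewrite /Cmat Kmat_dfwith scaleNr opprD addrA. Qed.

Lemma Cmat0 : Cmat (fun _ : offdiag_pos p => 0 : R) = 1%:M.
Proof.
rewrite /Cmat -[RHS]subr0; congr (_ - _); apply/matrixP => r c; rewrite [RHS]mxE.
have [rc|nrc] := boolP (offdiag p (r, c)); last exact: Kmat_diag.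
by rewrite (Kmat_offdiag _ _ _ rc).
Qed.

End Kmat.

Lemma det_Cmat_affine (R : comNzRingType) N (p : 'I_N -> nat) :
  coordwise_affine (fun x : offdiag_pos p -> R => \det (Cmat x)).
Proof.
by move=> k x t; rewrite (Cmat_dfwith x k t) (Cmat_dfwith x k 1) !det_add_delta; ring.
Qed.

Lemma measurableT_preimage {d d'} {T : measurableType d} {U : measurableType d'}
    {f : T -> U} {B : set U} :
  measurable_fun setT f -> measurable B -> measurable (f @^-1` B).
Proof. by move=> mf mB; rewrite -[X in measurable X]setTI; exact: mf. Qed.

Section Cylinders.
Context {d : measure_display} {Omega : measurableType d} {R : realType} {I : finType}.
Variable X : I -> Omega -> R.
Hypothesis mX : forall i, measurable_fun setT (X i).
Implicit Types (K J : {set I}) (phi : (I -> R) -> R).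

(* A pi-system generating the sigma-algebra of the [X i], [i \in K]. *)
Definition cylinder K : set (set Omega) :=
  [set \bigcap_(i in [set: I]) X i @^-1` B i | B in
    [set B : I -> set R | (forall i, measurable (B i)) /\ forall i, i \notin K -> B i = setT]].

Lemma cylinder_measurable K : cylinder K `<=` measurable.
Proof.
move=> _ [B [mB _] <-]; apply: fin_bigcap_measurable; first exact: finite_finset.
by move=> i _; exact: measurableT_preimage.
Qed.

Lemma sigma_cylinder_measurable K : <<s cylinder K >> `<=` measurable.
Proof. exact: smallest_sub (@sigma_algebra_measurable _ Omega) (@cylinder_measurable K). Qed.

Lemma cylinder_setT K : cylinder K setT.
Proof. by exists (fun=> setT) => //; apply/seteqP; split => w. Qed.

Lemma cylinder_setI_closed K : setI_closed (cylinder K).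
Proof.
move=> _ _ [B [mB KB] <-] [C [mC KC] <-].
exists (fun i => B i `&` C i); first split.
- by move=> i; exact: measurableI.
- by move=> i /[dup] /KB -> /KC ->; rewrite setIT.
apply/seteqP; split => w /=.
  by move=> h; split => i _; have [] := h i Logic.I.
by move=> [h1 h2] i _; split; [exact: h1 | exact: h2].
Qed.

Lemma measurable_coord_cylinder K j : j \in K ->
  measurable_fun [set: g_sigma_algebraType (cylinder K)] (X j).
Proof.
move=> jK _ C mC; apply: sub_sigma_algebra.
exists (fun i => if i == j then C else setT); first split.
- by move=> i; case: ifP.
- by move=> i iK; case: eqP => // ij; move: iK; rewrite ij jK.
apply/seteqP; split => w /=.
  by move=> h; split => //; have := h j Logic.I; rewrite eqxx.
by move=> [_ h] i _; case: eqP => // ->.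
Qed.

Lemma cylinder_measurable_fun {K d'} {T : measurableType d'} {Z : Omega -> T} :
  measurable_fun [set: g_sigma_algebraType (cylinder K)] Z ->
  measurable_fun [set: Omega] Z.
Proof. by move=> mZ _ C mC; apply: sigma_cylinder_measurable; exact: mZ. Qed.

Lemma cylinder_measurable_multiaffine K J phi :
  J \subset K -> multiaffine_on J phi ->
  measurable_fun [set: g_sigma_algebraType (cylinder K)] (fun w => phi (X^~ w)).
Proof.
move: {2}#|J| (erefl #|J|) => n; elim: n J phi => [|n IH] J phi cardJ JK phiJ.
  move: cardJ phiJ => /eqP; rewrite cards_eq0 => /eqP-> [dep _].
  rewrite (_ : (fun w => _) = cst (phi (fun=> 0))); first exact: measurable_cst.
  by apply/funext => w; exact: depends_only_on0.
have [k kJ] : exists k, k \in J by apply/card_gt0P; rewrite cardJ.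
have cardJk : #|J :\ k| = n by move: cardJ; rewrite (cardsD1 k) kJ add1n => -[].
have JkK : J :\ k \subset K := fintype.subset_trans (subD1set J k) JK.
rewrite (_ : (fun w => _) = fun w =>
    intercept phi k (X^~ w) + X k w * slope phi k (X^~ w)); last first.
  by apply/funext => w; exact: coordwise_affineE phiJ.2.
apply: measurable_funD; first exact: IH _ _ cardJk JkK (multiaffine_intercept _ _ k phiJ).
apply: measurable_funM; first by apply: measurable_coord_cylinder; exact: (fintype.subsetP JK).
exact: IH _ _ cardJk JkK (multiaffine_slope _ _ k phiJ).
Qed.

Lemma measurable_multiaffine J phi :
  multiaffine_on J phi -> measurable_fun setT (fun w => phi (X^~ w)).
Proof.
move=> phiJ; apply: (@cylinder_measurable_fun [set: I]%SET).
exact: cylinder_measurable_multiaffine (finset.subsetT J) phiJ.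
Qed.

Lemma measurable_multiaffine_eq0 {J phi} :
  multiaffine_on J phi -> measurable [set w | phi (X^~ w) = 0].
Proof.
move=> phiJ; apply: measurableT_preimage (measurable_set1 0).
exact: measurable_multiaffine phiJ.
Qed.

End Cylinders.

Definition affine_root_set (R : realType) : set ((R * R) * R) :=
  [set z | z.1.1 != 0 /\ z.1.2 + z.2 * z.1.1 = 0].

Lemma measurable_affine_root_set (R : realType) : measurable (@affine_root_set R).
Proof.
have ma : measurable_fun [set: (R * R) * R] (fun z => z.1.1).
  exact: measurableT_comp measurable_fst measurable_fst.
have mb : measurable_fun [set: (R * R) * R] (fun z => z.1.2 + z.2 * z.1.1).
  apply: measurable_funD; first exact: measurableT_comp measurable_snd measurable_fst.
  exact: measurable_funM measurable_snd ma.
rewrite (_ : affine_root_set R = (fun z => z.1.1) @^-1` (~` [set 0]) `&`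
                                 (fun z => z.1.2 + z.2 * z.1.1) @^-1` [set 0]).
  apply: measurableI; apply: measurableT_preimage => //.
  by apply: measurableC; exact: measurable_set1.
apply/seteqP; split => z /= [az bz]; split => //; first exact/eqP.
by apply/eqP.
Qed.

Lemma affine_zero_subset (T : Type) (R : realType) (a b t : T -> R) :
  [set w | b w + t w * a w = 0] `<=`
  ([set w | a w = 0] `&` [set w | b w = 0]) `|` [set w | affine_root_set R ((a w, b w), t w)].
Proof.
move=> w /= abt0; have [a0|a0] := eqVneq (a w) 0; [left | by right].
by split => //=; rewrite -abt0 a0 mulr0 addr0.
Qed.

Lemma affine_root_xsection_null {R : realType} {mu : {measure set R -> \bar R}} :
  (forall y, mu [set y] = 0) -> forall z, mu (xsection (@affine_root_set R) z) = 0.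
Proof.
move=> mu1 [a b]; have [->|a0] := eqVneq a 0.
  rewrite (_ : xsection _ _ = set0) ?measure0 //; apply/seteqP; split => t //.
  by rewrite /xsection /= in_setE /affine_root_set /= eqxx => -[].
apply: (subset_measure0 _ (measurable_set1 (- b / a))) (mu1 _).
  exact: measurable_xsection (measurable_affine_root_set R).
move=> t; rewrite /xsection /= in_setE /affine_root_set /= => -[_ root].
by apply: (mulIf a0); apply/eqP; rewrite divfK // -addr_eq0 addrC root.
Qed.

Lemma lebesgue_density_set1 {R : realType} {mu : set R -> \bar R} :
  has_lebesgue_density mu -> forall y, mu [set y] = 0.
Proof.
move=> [f [mf [f0 muE]]] y; rewrite muE; last exact: measurable_set1.
apply: null_set_integral; first exact: measurable_set1.
  by apply/measurable_EFinP; exact: measurable_funS mf.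
exact: lebesgue_measure_set1.
Qed.

Section IndependentCoordinates.
Context {d : measure_display} {Omega : measurableType d} {R : realType} {I : finType}.
Context {P : probability Omega R} {mu : probability R R} {X : I -> Omega -> R}.
Hypothesis hind : mutually_independent P X.
Hypothesis hlaw : forall i, has_law P (X i) mu.

Let mX i : measurable_fun setT (X i) := (hlaw i).1.
Implicit Types (K : {set I}) (k : I) (A : set Omega) (B : set R).

Lemma indep_sigma_cylinder K k B A : k \notin K -> measurable B ->
  <<s cylinder X K >> A -> P (A `&` X k @^-1` B) = (P A * mu B)%E.
Proof.
move=> kK mB sA.
have muBE : mu B = (fine (mu B))%:E by rewrite fineK // fin_num_measure.
have muB0 : 0 <= fine (mu B) by rewrite fine_ge0 // measure_ge0.
have mXB : measurable (X k @^-1` B) := measurableT_preimage (mX k) mB.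
rewrite muleC muBE.
(* Both sides are finite measures in [A] that agree on the pi-system. *)
have := @g_sigma_algebra_measure_unique _ _ _ (cylinder X K)
  (@cylinder_measurable _ _ _ _ X mX K) (fun=> setT) (fun=> cylinder_setT X K) _
  (mrestr P mXB) (mscale (NngNum muB0) P) (cylinder_setI_closed X K) _ _ A sA.
apply.
- by rewrite predeqE => w; split => // _; exists 0%N.
- move=> _ [C [mC KC] <-].
  transitivity ((fine (mu B))%:E * P (\bigcap_(i in [set: I]) X i @^-1` C i))%E; last by [].
  pose C' i := if i == k then B else C i.
  have mC' i : measurable (C' i) by rewrite /C'; case: ifP.
  transitivity (P (\bigcap_(i in [set: I]) X i @^-1` C' i)).
    congr (P _); apply/seteqP; split => w /=.
      by move=> [h1 h2] i _; rewrite /C'; case: eqP => [->|_] //; exact: h1.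
    move=> h; split; last by have := h k Logic.I; rewrite /C' eqxx.
    by move=> i _; have := h i Logic.I; rewrite /C'; case: eqP => [->|//]; rewrite KC.
  rewrite /= !hind // (bigD1 k) //= [in RHS](bigD1 k) //= /C' eqxx KC //.
  rewrite preimage_setT probability_setT mul1e (proj2 (hlaw k)) // -muBE.
  by congr (_ * _)%E; apply: eq_bigr => i /negbTE ->.
- move=> _; apply: (le_lt_trans (probability_le1 _ _)); last exact: ltry.
  exact: measurableI.
Qed.

Lemma pushforward_pair_indep {K k d'} {T : measurableType d'} {Z : Omega -> T} :
  k \notin K -> measurable_fun [set: g_sigma_algebraType (cylinder X K)] Z ->
  forall S, measurable S ->
    pushforward P (fun w => (Z w, X k w)) S = (pushforward P Z \x mu)%E S.
Proof.
move=> kK mZ S mS.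
have mZO := cylinder_measurable_fun _ mX mZ.
have mZX : measurable_fun setT (fun w => (Z w, X k w)) := measurable_fun_pair mZO (mX k).
apply: (@measure_unique _ _ _ [set A `*` B | A in measurable & B in measurable]
  (fun=> setT)) => //.
- by rewrite measurable_prod_measurableType.
- move=> _ _ [A1 mA1 [B1 mB1 <-]] [A2 mA2 [B2 mB2 <-]].
  rewrite -setXI; exists (A1 `&` A2); first exact: measurableI.
  by exists (B1 `&` B2) => //; exact: measurableI.
- by move=> _; exists setT => //; exists setT => //; rewrite setXTT.
- by rewrite predeqE => w; split => // _; exists 0%N.
- move=> _ [A mA [B mB <-]].
  rewrite [RHS]product_measure1E //.
  apply: (@indep_sigma_cylinder K k B (Z @^-1` A)) => //.
  by have := mZ measurableT A mA; rewrite setTI.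
- move=> _; apply: (le_lt_trans (probability_le1 _ _)); last exact: ltry.
  exact: measurableT_preimage.
Qed.

Lemma indep_null_sections {K k d'} {T : measurableType d'} {Z : Omega -> T}
    {S : set (T * R)} :
  k \notin K -> measurable_fun [set: g_sigma_algebraType (cylinder X K)] Z ->
  measurable S -> (forall z, mu (xsection S z) = 0) ->
  P [set w | S (Z w, X k w)] = 0.
Proof.
move=> kK mZ mS S0.
change (pushforward P (fun w => (Z w, X k w)) S = 0).
rewrite (pushforward_pair_indep kK mZ _ mS) /product_measure1.
rewrite (eq_integral (fun=> 0%E)).
- exact: (cylinder_measurable_fun _ mX mZ).
- by move=> mZO; exact: integral0.
- by move=> z _; rewrite /= S0.
Qed.

Hypothesis mu_atomless : forall y, mu [set y] = 0.

Lemma multiaffine_zero_null {J phi} : multiaffine_on J phi -> (exists x, phi x != 0) ->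
  P [set w | phi (X^~ w) = 0] = 0.
Proof.
move: {2}#|J| (erefl #|J|) => n; elim: n J phi => [|n IH] J phi cardJ phiJ [x0 phix0].
  move: cardJ phiJ => /eqP; rewrite cards_eq0 => /eqP-> [dep _].
  rewrite (_ : [set w | _] = set0) ?measure0 //; apply/seteqP; split => w //=.
  by rewrite (depends_only_on0 _ _ x0 dep) => phi0; rewrite phi0 eqxx in phix0.
have [k kJ] : exists k, k \in J by apply/card_gt0P; rewrite cardJ.
have cardJk : #|J :\ k| = n by move: cardJ; rewrite (cardsD1 k) kJ add1n => -[].
have aJ := multiaffine_slope _ _ k phiJ; have bJ := multiaffine_intercept _ _ k phiJ.
pose a w := slope phi k (X^~ w); pose b w := intercept phi k (X^~ w).
pose K := ([set: I] :\ k)%SET.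
have kK : k \notin K by rewrite !inE eqxx.
have JkK : J :\ k \subset K := finset.setSD _ (finset.subsetT J).
have mab : measurable_fun [set: g_sigma_algebraType (cylinder X K)] (fun w => (a w, b w)).
  by apply: measurable_fun_pair; exact: cylinder_measurable_multiaffine JkK _.
pose E1 := [set w | a w = 0] `&` [set w | b w = 0].
pose E2 := [set w | affine_root_set R ((a w, b w), X k w)].
have mE1 : measurable E1.
  by apply: measurableI; [exact: (measurable_multiaffine_eq0 _ mX aJ) |
                          exact: (measurable_multiaffine_eq0 _ mX bJ)].
have mE2 : measurable E2.
  apply: measurableT_preimage (measurable_affine_root_set R).
  exact: measurable_fun_pair (cylinder_measurable_fun _ mX mab) (mX k).
have E1_null : P E1 = 0.
  have [[x bx]|[x ax]] := intercept_or_slope_neq0 _ k (ex_intro _ x0 phix0) phiJ.2.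
    apply: (subset_measure0 mE1 (measurable_multiaffine_eq0 _ mX bJ) (@subIsetr _ _ _)).
    by apply: IH cardJk bJ _; exists x.
  apply: (subset_measure0 mE1 (measurable_multiaffine_eq0 _ mX aJ) (@subIsetl _ _ _)).
  by apply: IH cardJk aJ _; exists x.
have E2_null : P E2 = 0.
  apply: indep_null_sections kK mab (measurable_affine_root_set R) _.
  exact: affine_root_xsection_null mu_atomless.
apply: (subset_measure0 (measurable_multiaffine_eq0 _ mX phiJ) (measurableU _ _ mE1 mE2)).
  move=> w /= phi0; apply: affine_zero_subset => /=.
  by rewrite -phi0 [RHS](coordwise_affineE _ k _ phiJ.2).
exact: etrans (measureU0 mE1 mE2 E2_null) E1_null.
Qed.

End IndependentCoordinates.

Theorem proposition4 (R : realType) (mu : probability R R)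
    (hmu : has_lebesgue_density mu)
    (N : nat) (hN : (2 <= N)%N) (p : 'I_N -> nat) (hp : forall i, (1 <= p i)%N)
    (d : measure_display) (Omega : measurableType d) (P : probability Omega R)
    (X : offdiag_pos p -> Omega -> R)
    (hind : mutually_independent P X)
    (hlaw : forall k, has_law P (X k) mu) :
  P [set w | Cmat (fun k => X k w) \in unitmx] = 1%E.
Proof.
pose phi (x : offdiag_pos p -> R) := \det (Cmat x).
have phiT : multiaffine_on [set: offdiag_pos p]%SET phi.
  by split; [exact: depends_only_onT | exact: det_Cmat_affine].
have phi0 : phi (fun=> 0) != 0 by rewrite /phi Cmat0 det1 oner_neq0.
have null : P [set w | phi (X^~ w) = 0] = 0.
  apply: (multiaffine_zero_null hind hlaw (lebesgue_density_set1 hmu) phiT).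
  by exists (fun=> 0).
have mzero : measurable [set w | phi (X^~ w) = 0].
  exact: (measurable_multiaffine_eq0 _ (fun k => (hlaw k).1) phiT).
rewrite (_ : [set w | _] = ~` [set w | phi (X^~ w) = 0]).
  by rewrite probability_setC // null sube0.
by apply/seteqP; split => w /=; rewrite unitmxE unitfE => /eqP.
Qed.
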